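(* There exists $e\in S$ such that $(g(e))_{g\in\Gamma_f}$ is a basis of $S$ over $S_0$. Moreover, $e$ can be chosen so that $p$ divides none of the elements $p_i(e)$, $0\le i\le p-2$, where $p_i=\frac{1}{|\Gamma_f|}\sum_{g\in\Gamma_f}\chi(g)^{-i}g$.
   Context: $p$ odd prime, $\mathcal{K}$ absolutely unramified complete discretely valued field of characteristic $0$ with perfect residue field $k$, $W=W(k)$, $\chi$ the cyclotomic character of $\Gamma_{\mathcal{K}}$. $\pi=[\varepsilon]-1\in W(R)$ where $\varepsilon$ is a compatible system of $p^n$-th roots of unity ($\varepsilon^{(1)}\ne1$), $S=W[[\pi]]$ with action $g(\pi)=(1+\pi)^{\chi(g)}-1$ of $\Gamma=\mathrm{Gal}(\mathcal{K}(\mu_{p^\infty})/\mathcal{K})$; $\Gamma_f$ is the torsion subgroup of $\Gamma$ (of order $p-1$) and $S_0=S^{\Gamma_f}=W[[\pi_0]]$ with $\pi_0=-p+\sum_{a\in\mathbb{F}_p}[\varepsilon]^a$. *)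

From HB Require Import structures.
From Stdlib Require Import ClassicalEpsilon.
From mathcomp Require Import all_boot all_order all_algebra.
Set Implicit Arguments. Unset Strict Implicit. Unset Printing Implicit Defensive.
Import Order.TTheory GRing.Theory.
Local Open Scope ring_scope.

(* W = W(k), k perfect of characteristic p, is characterised (Serre, Local
   Fields II.5) as a strict p-ring: p-torsion free, p-adically separated and
   complete, with W/pW a (nonzero) perfect field. *)
Definition pdvd (W : comUnitRingType) (p : nat) (x : W) : Prop :=
  exists y : W, x = p%:R * y.

Definition strict_p_ring (W : comUnitRingType) (p : nat) : Prop :=
  (forall x : W, p%:R * x = 0 -> x = 0) /\
  [/\ ~ ((p%:R : W) \is a GRing.unit),
      (forall x : W, ~ pdvd p x -> x \is a GRing.unit),
      (forall x : W, exists y z : W, x = y ^+ p + p%:R * z),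
      (forall x : W, (forall n : nat, exists y : W, x = (p%:R) ^+ n * y) -> x = 0)
    & (forall s : nat -> W,
        (forall n : nat, exists y : W, s n.+1 - s n = (p%:R) ^+ n * y) ->
        exists l : W, forall n : nat, exists y : W, l - s n = (p%:R) ^+ n * y)].

Section Series.
Variable R : comUnitRingType.

Definition series := nat -> R.
Definition szero : series := fun _ => 0.
Definition sone : series := fun n => if n == 0%N then 1 else 0.
Definition sadd (f g : series) : series := fun n => f n + g n.
Definition smul (f g : series) : series :=
  fun n => \sum_(i < n.+1) f i * g (n - i)%N.
Definition sscale (c : R) (f : series) : series := fun n => c * f n.
Definition spow (f : series) (k : nat) : series := iter k (smul f) sone.
(* composition f(u), for u with zero constant term *)
Definition scomp (f u : series) : series :=
  fun m => \sum_(k < m.+1) f k * spow u k m.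

(* binomial coefficient binom(z, n) in a torsion-free ring: the c with
   n! c = z (z-1) ... (z-n+1) (it exists and is unique for z in Z_p) *)
Definition binomR (z : R) (n : nat) : R :=
  epsilon (inhabits 0) (fun c : R => (n`!)%:R * c = \prod_(j < n) (z - (j : nat)%:R)).

(* (1 + pi)^z - 1 *)
Definition pow1pX_sub1 (z : R) : series :=
  fun n => if n == 0%N then 0 else binomR z n.

(* action of g with chi(g) = z on S = W[[pi]]: pi |-> (1+pi)^z - 1 *)
Definition gact (z : R) (f : series) : series := scomp f (pow1pX_sub1 z).
End Series.

Section Gammaf.
Variables (p : nat) (W : comUnitRingType) (omega : 'I_p -> W).
(* Gamma_f is indexed by a in F_p^x, chi(g_a) = omega a (Teichmueller lift) *)

Definition fixedGf (f : series W) : Prop :=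
  forall a : 'I_p, (0 < a)%N -> gact (omega a) f =1 f.

Definition combo (c : 'I_p -> series W) (e : series W) : series W :=
  fun n => \sum_(a < p | (0 < a)%N) smul (c a) (gact (omega a) e) n.

Definition is_basis_over_S0 (e : series W) : Prop :=
  (forall f : series W, exists c : 'I_p -> series W,
      (forall a : 'I_p, (0 < a)%N -> fixedGf (c a)) /\ f =1 combo c e)
  /\ (forall c : 'I_p -> series W,
      (forall a : 'I_p, (0 < a)%N -> fixedGf (c a)) -> combo c e =1 szero W ->
      forall a : 'I_p, (0 < a)%N -> c a =1 szero W).

Definition proj_i (i : nat) (e : series W) : series W :=
  fun n => ((p.-1)%:R)^-1 *
    \sum_(a < p | (0 < a)%N) ((omega a)^-1) ^+ i * gact (omega a) e n.

Definition pdvd_series (f : series W) : Prop :=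
  exists h : series W, f =1 sscale (p%:R) h.
End Gammaf.

From mathcomp Require Import all_boot all_order all_algebra.
From mathcomp Require Import zify ring.
From Stdlib Require Import ClassicalEpsilon FunctionalExtensionality.
Import GRing.Theory.
Local Open Scope ring_scope.

(* Let u = (1/(p-1)) sum_b omega(b)^-1 ((1+pi)^omega(b) - 1), the sum running
   over b in F_p^x.  Since g_a((1+pi)^z - 1) = (1+pi)^(omega(a) z) - 1 and
   b |-> ab permutes F_p^x, g_a(u) = omega(a) u; as u = pi + O(pi^2), the ring
   automorphism F |-> F(u) of S turns g_a into the substitution
   X |-> omega(a) X.  In this coordinate S_0 consists of the series in X^(p-1),
   and e = 1 + u + ... + u^(p-2) has conjugates
   g_a(e) = sum_(j < p-1) omega(a)^j u^j.  The orthogonality relations of the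
   characters a |-> omega(a)^j make the matrix (omega(a)^j) invertible over W,
   so the g_a(e) form an S_0-basis of S, and p_i(e) = u^i is not divisible
   by p.  The composition law of the series (1+pi)^z - 1 is proved modulo every
   p^K, approximating z in Z_p by integers, for which it is a polynomial
   identity. *)

Lemma big_ord_trunc {R : nmodType} {n m : nat} {F : nat -> R} : (m <= n)%N ->
  (forall i, (m <= i)%N -> F i = 0) -> \sum_(i < n) F i = \sum_(i < m) F i.
Proof.
move=> le_mn F0; rewrite (big_ord_widen n F le_mn) [RHS]big_mkcond.
by apply: eq_bigr => i _; case: ltnP => // /F0.
Qed.

Lemma sumr_pos_ord1 (R : pzSemiRingType) n :
  \sum_(a < n | (0 < a)%N) (1 : R) = n.-1%:R.
Proof.
rewrite big_mkcond /=; elim: n => [|n IHn]; first by rewrite big_ord0.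
by rewrite big_ord_recr /= IHn; case: n {IHn} => [|n] /=; rewrite ?addr0 ?natr1.
Qed.

Lemma fact_dvdn j m : (j <= m)%N -> (j`! %| m`!)%N.
Proof. by move=> le_jm; rewrite -(ffact_fact (leq_subr j m)) subKn // dvdn_mull. Qed.

Lemma prod_natr_sub (R : pzRingType) (N n : nat) :
  \prod_(j < n) (N%:R - j%:R : R) = (N ^_ n)%:R.
Proof.
elim: n => [|n IHn]; first by rewrite big_ord0.
rewrite big_ord_recr /= IHn ffactnSr natrM.
case: (leqP n N) => [le_nN | lt_Nn]; first by rewrite natrB.
by rewrite ffact_small // !mul0r.
Qed.

Lemma coef_X_add1_exp (R : nzRingType) (n m : nat) :
  (('X + 1) ^+ n : {poly R})`_m = 'C(n, m)%:R.
Proof.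
have -> : ('X + 1) ^+ n = \poly_(i < n.+1) 'C(n, i)%:R :> {poly R}.
  by rewrite exprD1n poly_def; apply: eq_bigr => i _; rewrite scaler_nat.
by rewrite coef_poly; case: ltnP => // /bin_small ->.
Qed.

Lemma exists_pow_neq1_modp {p r} : prime p -> (0 < r < p.-1)%N ->
  exists2 b, (0 < b < p)%N & ~~ (p %| b ^ r - 1)%N.
Proof.
move=> p_pr /andP[r_gt0 lt_r_p1]; have p_gt1 := prime_gt1 p_pr.
have [/allP roots | /allPn[b b_in nroot]] :=
  boolP (all (fun b => p %| b ^ r - 1)%N (iota 1 p.-1)); last first.
  by exists b => //; move: b_in; rewrite mem_iota; lia.
(* Otherwise 1, ..., p-1 are p-1 > r distinct roots of X^r - 1 in F_p. *)
pose rs := [seq (b%:R : 'F_p) | b <- iota 1 p.-1].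
suff : (size rs <= r)%N by rewrite size_map size_iota; lia.
apply: max_unity_roots r_gt0 _ _.
  apply/allP => _ /mapP[b b_in ->]; rewrite unity_rootE -natrX.
  have b_gt0 : (0 < b)%N by move: b_in; rewrite mem_iota; lia.
  have br_gt0 : (0 < b ^ r)%N by rewrite expn_gt0 b_gt0.
  by rewrite -(subnK br_gt0) natrD -Fp_nat_mod // (eqP (roots b b_in)) add0r.
rewrite map_inj_in_uniq ?iota_uniq // => i j; rewrite !mem_iota => i_in j_in.
by move/(congr1 val) => /=; rewrite !val_Fp_nat // !modn_small //; lia.
Qed.

(** * Truncations of power series *)

(* The n-th coefficient of [smul], [spow] and [scomp] only depends on the first
   n+1 coefficients of their arguments, so their algebraic laws are inherited
   from polynomials. *)

Section TruncatedPolynomials.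
Context {R : comUnitRingType}.
Implicit Types (f g u v : series R) (P Q : {poly R}).

Definition trunc_poly N f : {poly R} := \poly_(i < N) f i.

Lemma coef_trunc_poly N f i : (i < N)%N -> (trunc_poly N f)`_i = f i.
Proof. by move=> lt_iN; rewrite coef_poly lt_iN. Qed.

Definition eqmodX N P Q := forall i, (i < N)%N -> P`_i = Q`_i.

Lemma eqmodXM {N P P' Q Q'} :
  eqmodX N P P' -> eqmodX N Q Q' -> eqmodX N (P * Q) (P' * Q').
Proof.
move=> eP eQ i lt_iN; rewrite !coefM; apply: eq_bigr => j _.
rewrite eP ?eQ //; apply: leq_ltn_trans lt_iN; [exact: leq_subr | by rewrite -ltnS].
Qed.

Lemma eqmodX_exp {N P Q} k : eqmodX N P Q -> eqmodX N (P ^+ k) (Q ^+ k).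
Proof.
by move=> ePQ; elim: k => [|k IHk] //; rewrite !exprS; apply: eqmodXM.
Qed.

Lemma coef_exp_lt Q k m : Q`_0 = 0 -> (m < k)%N -> (Q ^+ k)`_m = 0.
Proof.
move=> Q0; elim: k m => [|k IHk] m // lt_mk.
rewrite exprS coefM big1 // => -[[|j] lt_jm] _ /=; first by rewrite Q0 mul0r.
by rewrite IHk ?mulr0 //; lia.
Qed.

Lemma coef_exp_diag Q k : Q`_0 = 0 -> (Q ^+ k)`_k = Q`_1 ^+ k.
Proof.
move=> Q0; elim: k => [|k IHk]; first by rewrite expr0 coefC.
rewrite exprS coefM big_ord_recl /= Q0 mul0r add0r big_ord_recl /=.
rewrite subSS subn0 IHk -exprS big1 ?addr0 // => -[j lt_jk] _ /=.
by rewrite /bump /= !add1n coef_exp_lt ?mulr0 //; lia.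
Qed.

Lemma coef_comp_poly_le {P} Q {K} m : (size P <= K)%N ->
  (P \Po Q)`_m = \sum_(i < K) P`_i * (Q ^+ i)`_m.
Proof.
move=> le_PK; rewrite coef_comp_poly; symmetry.
apply: (big_ord_trunc (F := fun i => P`_i * (Q ^+ i)`_m)) => // i le_Pi.
by rewrite nth_default ?mul0r.
Qed.

Lemma eqmodX_comp {N P P' Q Q'} : eqmodX N P P' -> eqmodX N Q Q' ->
  Q`_0 = 0 -> Q'`_0 = 0 -> eqmodX N (P \Po Q) (P' \Po Q').
Proof.
move=> eP eQ Q0 Q'0 m lt_mN; set K := (maxn (size P) (size P') + N)%N.
have le_PK : (size P <= K)%N by rewrite /K; lia.
have le_P'K : (size P' <= K)%N by rewrite /K; lia.
rewrite (coef_comp_poly_le Q m le_PK) (coef_comp_poly_le Q' m le_P'K).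
apply: eq_bigr => -[i lt_iK] _ /=; case: (ltnP i N) => [lt_iN | le_Ni].
  by rewrite eP // (eqmodX_exp i eQ m lt_mN).
by rewrite !coef_exp_lt ?mulr0 //; apply: leq_trans le_Ni.
Qed.

Lemma smul_trunc {N} f g {n} :
  (n < N)%N -> smul f g n = (trunc_poly N f * trunc_poly N g)`_n.
Proof.
move=> lt_nN; rewrite coefM; apply: eq_bigr => -[i lt_in] _ /=.
rewrite !coef_trunc_poly //; apply: leq_ltn_trans lt_nN; first exact: leq_subr.
by rewrite -ltnS.
Qed.

Lemma spow_trunc {N} f k {n} : (n < N)%N -> spow f k n = (trunc_poly N f ^+ k)`_n.
Proof.
elim: k n => [|k IHk] n lt_nN; first by rewrite coefC.
rewrite exprS coefM /spow iterS -/(spow f k); apply: eq_bigr => -[i lt_in] _ /=.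
rewrite coef_trunc_poly; last by apply: leq_ltn_trans lt_nN; rewrite -ltnS.
by rewrite IHk //; apply: leq_ltn_trans lt_nN; apply: leq_subr.
Qed.

Lemma spow_diag f k : f 0%N = 0 -> spow f k k = f 1%N ^+ k.
Proof.
by move=> f0; rewrite (@spow_trunc k.+2) // coef_exp_diag ?coef_trunc_poly.
Qed.

Lemma scomp_trunc {N} f u {m} : (m < N)%N -> u 0%N = 0 ->
  scomp f u m = (trunc_poly N f \Po trunc_poly N u)`_m.
Proof.
move=> lt_mN u0; rewrite (coef_comp_poly_le _ m (size_poly N f)).
set F := fun i => (trunc_poly N f)`_i * (trunc_poly N u ^+ i)`_m.
rewrite (big_ord_trunc (F := F) lt_mN) => [|i lt_mi]; last first.
  by rewrite /F coef_exp_lt ?mulr0 ?coef_trunc_poly //; apply: leq_ltn_trans lt_mN.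
apply: eq_bigr => -[i lt_im] _ /=; rewrite /F.
by rewrite (spow_trunc _ _ lt_mN) coef_trunc_poly //; apply: leq_ltn_trans lt_mN.
Qed.

Lemma scomp_coef0 f u : u 0%N = 0 -> scomp f u 0%N = f 0%N.
Proof. by move=> u0; rewrite /scomp big_ord1 /= mulr1. Qed.

Lemma trunc_scomp {N} f u : u 0%N = 0 ->
  eqmodX N (trunc_poly N (scomp f u)) (trunc_poly N f \Po trunc_poly N u).
Proof. by move=> u0 i lt_iN; rewrite coef_trunc_poly // (scomp_trunc _ _ lt_iN u0). Qed.

Lemma trunc_smul {N} f g :
  eqmodX N (trunc_poly N (smul f g)) (trunc_poly N f * trunc_poly N g).
Proof. by move=> i lt_iN; rewrite coef_trunc_poly // (smul_trunc _ _ lt_iN). Qed.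

Lemma trunc_poly_coef0 {N f} : (0 < N)%N -> f 0%N = 0 -> (trunc_poly N f)`_0 = 0.
Proof. by move=> N_gt0 f0; rewrite coef_trunc_poly. Qed.

Lemma scompA f u v : u 0%N = 0 -> v 0%N = 0 ->
  scomp (scomp f u) v =1 scomp f (scomp u v).
Proof.
move=> u0 v0 m; have lt_m : (m < m.+1)%N by [].
have uv0 : scomp u v 0%N = 0 by rewrite scomp_coef0.
have tv0 := trunc_poly_coef0 (ltn0Sn m) v0.
rewrite (scomp_trunc _ _ lt_m v0) (scomp_trunc _ _ lt_m uv0).
rewrite (eqmodX_comp (trunc_scomp _ _ u0) (fun _ _ => erefl) tv0 tv0 m lt_m).
rewrite -comp_polyA; apply: (eqmodX_comp (fun _ _ => erefl) _ _ _ m lt_m) => //.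
- by move=> i lt_i; rewrite (trunc_scomp _ _ v0).
- by rewrite -(trunc_scomp _ _ v0) // trunc_poly_coef0.
- exact: trunc_poly_coef0.
Qed.

Lemma scompM f g u : u 0%N = 0 ->
  scomp (smul f g) u =1 smul (scomp f u) (scomp g u).
Proof.
move=> u0 m; have lt_m : (m < m.+1)%N by [].
have tu0 := trunc_poly_coef0 (ltn0Sn m) u0.
rewrite (scomp_trunc _ _ lt_m u0) (smul_trunc _ _ lt_m).
rewrite (eqmodX_comp (trunc_smul f g) (fun _ _ => erefl) tu0 tu0 m lt_m).
by rewrite comp_polyM; apply: (eqmodXM _ _ m lt_m) => i lt_i; rewrite (trunc_scomp _ _ u0).
Qed.

Lemma scomp_sum (I : finType) (Q : pred I) (a : I -> R) (F : I -> series R) u m :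
  scomp (fun n => \sum_(i | Q i) a i * F i n) u m =
  \sum_(i | Q i) a i * scomp (F i) u m.
Proof.
rewrite /scomp; under eq_bigr do rewrite mulr_suml.
rewrite exchange_big /=; apply: eq_bigr => i _; rewrite mulr_sumr.
by apply: eq_bigr => k _; rewrite mulrA.
Qed.

Lemma scomp_scale (c : R) f u m : scomp (fun n => c * f n) u m = c * scomp f u m.
Proof. by rewrite /scomp mulr_sumr; apply: eq_bigr => k _; rewrite mulrA. Qed.

Lemma spow_scale (c : R) u k n : spow (fun j => c * u j) k n = c ^+ k * spow u k n.
Proof.
elim: k n => [|k IHk] n; first by rewrite mul1r.
rewrite /spow !iterS -!/(spow _ k) /smul exprS mulr_sumr.
by apply: eq_bigr => i _; rewrite IHk; ring.
Qed.

Lemma scomp_scale_inner (c : R) f u m :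
  scomp f (fun j => c * u j) m = scomp (fun n => c ^+ n * f n) u m.
Proof. by apply: eq_bigr => k _; rewrite spow_scale; ring. Qed.

Lemma scomp_szero u m : scomp (szero R) u m = 0.
Proof. by rewrite /scomp big1 // => k _; rewrite mul0r. Qed.

Lemma smul_dvd_supp {d f g} n : (0 < d)%N ->
  (forall j, ~~ (d %| j)%N -> f j = 0) -> (forall j, (d <= j)%N -> g j = 0) ->
  smul f g n = f (n %/ d * d)%N * g (n %% d)%N.
Proof.
move=> d_gt0 f0 g0; have lt_qn : (n %/ d * d < n.+1)%N by rewrite ltnS leq_trunc_div.
rewrite /smul (bigD1 (Ordinal lt_qn)) //= big1 ?addr0.
  by rewrite {2}(divn_eq n d) addKn.
move=> [j lt_jn]; rewrite -val_eqE /= => neq_jq.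
have [/dvdnP[q ej] | /f0 ->] := boolP (d %| j)%N; last by rewrite mul0r.
rewrite g0 ?mulr0 //; subst j; have le_q : (q <= n %/ d)%N by rewrite leq_divRL // -ltnS.
have lt_q : (q < n %/ d)%N by rewrite ltn_neqAle le_q andbT; apply: contraNneq neq_jq => ->.
have := divn_eq n d; have : (q.+1 * d <= n %/ d * d)%N by rewrite leq_mul2r lt_q orbT.
by rewrite mulSn; lia.
Qed.

Lemma pow1pX_sub1_coef1 (z : R) : pow1pX_sub1 z 1 = z.
Proof.
have : exists c : R, (1`!)%:R * c = \prod_(j < 1) (z - j%:R).
  by exists z; rewrite big_ord1 subr0 mul1r.
by move/(epsilon_spec (inhabits 0)); rewrite -/(binomR z 1) big_ord1 subr0 mul1r.
Qed.

End TruncatedPolynomials.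

(** * Congruences modulo powers of p *)

Section PAdic.
Variable p : nat.
Context {W : comUnitRingType}.
Local Notation P := (p%:R : W).

Definition pcong K (x y : W) := exists t, x - y = P ^+ K * t.

Lemma pcong_refl K x : pcong K x x.
Proof. by exists 0; rewrite subrr mulr0. Qed.

Lemma pcong_sym {K x y} : pcong K x y -> pcong K y x.
Proof. by case=> t e; exists (- t); rewrite mulrN -e opprB. Qed.

Lemma pcong_trans {K x y z} : pcong K x y -> pcong K y z -> pcong K x z.
Proof. by case=> t e [s e']; exists (t + s); rewrite mulrDr -e -e' addrA subrK. Qed.

Lemma pcongD {K x y x' y'} : pcong K x x' -> pcong K y y' -> pcong K (x + y) (x' + y').
Proof. by case=> t e [s e']; exists (t + s); rewrite mulrDr -e -e'; ring. Qed.

Lemma pcongN {K x y} : pcong K x y -> pcong K (- x) (- y).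
Proof. by case=> t e; exists (- t); rewrite mulrN -e; ring. Qed.

Lemma pcongB {K x y x' y'} : pcong K x x' -> pcong K y y' -> pcong K (x - y) (x' - y').
Proof. by move=> ex ey; apply: pcongD => //; apply: pcongN. Qed.

Lemma pcongM {K x y x' y'} : pcong K x x' -> pcong K y y' -> pcong K (x * y) (x' * y').
Proof.
case=> t e [s e']; exists (t * y + x' * s).
have -> : x * y - x' * y' = (x - x') * y + x' * (y - y') by ring.
by rewrite e e'; ring.
Qed.

Lemma pcong_le {K K' x y} : (K <= K')%N -> pcong K' x y -> pcong K x y.
Proof.
by move=> le_KK' [t e]; exists (P ^+ (K' - K) * t); rewrite e mulrA -exprD subnKC.
Qed.

Lemma pcong_sum K (I : finType) (Q : pred I) (F G : I -> W) :
  (forall i, Q i -> pcong K (F i) (G i)) ->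
  pcong K (\sum_(i | Q i) F i) (\sum_(i | Q i) G i).
Proof.
move=> eFG; apply: (big_ind2 (pcong K)) => //; first exact: pcong_refl.
by move=> *; apply: pcongD.
Qed.

Lemma pcong_prod K (I : finType) (Q : pred I) (F G : I -> W) :
  (forall i, Q i -> pcong K (F i) (G i)) ->
  pcong K (\prod_(i | Q i) F i) (\prod_(i | Q i) G i).
Proof.
move=> eFG; apply: (big_ind2 (pcong K)) => //; first exact: pcong_refl.
by move=> *; apply: pcongM.
Qed.

Lemma pcongX {K x y} n : pcong K x y -> pcong K (x ^+ n) (y ^+ n).
Proof.
move=> exy; elim: n => [|n IHn]; first exact: pcong_refl.
by rewrite !exprS; apply: pcongM.
Qed.

Lemma spow_pcong {K m} {f g : series W} :
  (forall j, (j <= m)%N -> pcong K (f j) (g j)) ->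
  forall k j, (j <= m)%N -> pcong K (spow f k j) (spow g k j).
Proof.
move=> efg k; elim: k => [|k IHk] j le_jm; first exact: pcong_refl.
rewrite /spow !iterS -!/(spow _ k); apply: pcong_sum => -[i lt_ij] _ /=.
apply: pcongM; first by apply: efg; apply: leq_trans le_jm.
by apply: IHk; apply: leq_trans (leq_subr i j) le_jm.
Qed.

Section StrictPRing.
Hypotheses (p_pr : prime p) (W_strict : strict_p_ring W p).

Lemma pcong_sum_geom n {x y} : pcong 1 x y ->
  pcong 1 (\sum_(i < n) x ^+ (n.-1 - i) * y ^+ i) (y ^+ n.-1 *+ n).
Proof.
move=> exy; rewrite -[X in _ *+ X]card_ord -sumr_const; apply: pcong_sum => i _.
have -> : y ^+ n.-1 = y ^+ (n.-1 - i) * y ^+ i.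
  by rewrite -exprD subnK //; have := ltn_ord i; lia.
by apply: pcongM; [apply: pcongX | apply: pcong_refl].
Qed.

Lemma pcong_expp {j x y} : (0 < j)%N -> pcong j x y -> pcong j.+1 (x ^+ p) (y ^+ p).
Proof.
move=> j_gt0 exy; have [t e] := exy.
have [s eS] : pcong 1 (\sum_(i < p) x ^+ (p.-1 - i) * y ^+ i) 0.
  apply: pcong_trans (pcong_sum_geom p (pcong_le j_gt0 exy)) _.
  by exists (y ^+ p.-1); rewrite subr0 expr1 mulr_natl.
exists (t * s); rewrite subrXX e; rewrite subr0 in eS.
by rewrite eS expr1 exprSr; ring.
Qed.

Lemma pcong_exppn k {x y} : pcong 1 x y -> pcong k.+1 (x ^+ (p ^ k)) (y ^+ (p ^ k)).
Proof.
move=> exy; elim: k => [|k IHk]; first by rewrite expn0 !expr1.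
by rewrite expnSr !exprM; apply: pcong_expp.
Qed.

Lemma mulpX_inj K : injective (fun x : W => P ^+ K * x).
Proof.
have P_tf x : P * x = 0 -> x = 0 by case: W_strict => + _; apply.
have PK_tf x : P ^+ K * x = 0 -> x = 0.
  by elim: K x => [|K IHK] x; rewrite ?mul1r // exprSr -mulrA => /IHK /P_tf.
move=> x y /= /eqP; rewrite -subr_eq0 -mulrBr => /eqP /PK_tf /eqP.
by rewrite subr_eq0 => /eqP.
Qed.

Lemma pcong_eq x y : (forall K, pcong K x y) -> x = y.
Proof.
case: W_strict => _ [_ _ _ sep _] exy; apply/eqP; rewrite -subr_eq0; apply/eqP.
by apply: sep => n; have [t e] := exy n; exists t.
Qed.

Lemma p_nonunit : P \isn't a GRing.unit.
Proof. by case: W_strict => _ [/negP]. Qed.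

Lemma unit_npdvd (x : W) : ~ pdvd p x -> x \is a GRing.unit.
Proof. by case: W_strict => _ [_ + _ _ _]; apply. Qed.

Lemma pcong_unit {x y} : x \is a GRing.unit -> pcong 1 x y -> y \is a GRing.unit.
Proof.
move=> x_unit [t e]; apply: unit_npdvd => -[s es]; move/negP: p_nonunit; apply.
have ex : x = P * (t + s) by rewrite mulrDr -es -[P]expr1 -e subrK.
by move: x_unit; rewrite ex unitrM => /andP[].
Qed.

Lemma natr_unit {n} : ~~ (p %| n)%N -> (n%:R : W) \is a GRing.unit.
Proof.
move=> p_n; apply: unit_npdvd => -[y ny]; move/negP: p_nonunit; apply.
have [a _] := Bezoutl n (prime_gt0 p_pr).
rewrite (eqP (_ : coprime p n)) ?prime_coprime // => /dvdnP[k ek].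
have : (1 + a * n)%:R = (k * p)%:R :> W by rewrite ek.
rewrite natrD natrM natrM ny => e; apply/unitrP; exists (k%:R - a%:R * y).
by split; rewrite ?[_ * P]mulrC mulrBr mulrA [P * _]mulrC -e; ring.
Qed.

Lemma natr_sub_unit {a b : nat} : (a < p)%N -> (b < p)%N -> a != b ->
  (a%:R - b%:R : W) \is a GRing.unit.
Proof.
move=> lt_ap lt_bp neq_ab; case: (ltngtP a b) => [lt_ab | lt_ba | eq_ab].
- by rewrite -opprB -natrB ?(ltnW lt_ab) // unitrN natr_unit // gtnNdvd; lia.
- by rewrite -natrB ?(ltnW lt_ba) // natr_unit // gtnNdvd; lia.
- by rewrite eq_ab eqxx in neq_ab.
Qed.

Lemma natr_fact_pfactor n :
  exists2 u : W, u \is a GRing.unit & (n`!)%:R = P ^+ logn p n`! * u.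
Proof.
exists ((n`!)`_p^')%:R; first by apply: natr_unit; rewrite -p'natE ?part_pnat.
by rewrite -natrX -natrM -p_part partnC // fact_gt0.
Qed.

Lemma natr_fact_inj n : injective (fun x : W => (n`!)%:R * x).
Proof.
have [u u_unit ->] := natr_fact_pfactor n; move=> x y /=; rewrite -!mulrA.
by move/mulpX_inj/(mulrI u_unit).
Qed.

Lemma pcong_unity_eq x y : x ^+ p.-1 = 1 -> y ^+ p.-1 = 1 -> pcong 1 x y -> x = y.
Proof.
move=> x1 y1 exy; have p_gt1 := prime_gt1 p_pr.
have y_unit : y \is a GRing.unit.
  have ep : p.-2.+1 = p.-1 by lia.
  by apply/unitrP; exists (y ^+ p.-2); rewrite -exprS -exprSr ep y1.
(* x^(p-1) - y^(p-1) = (x - y) S, and S = (p-1) y^(p-2) mod p is a unit. *)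
set S := \sum_(i < p.-1) x ^+ (p.-1.-1 - i) * y ^+ i.
have S_unit : S \is a GRing.unit.
  apply: pcong_unit (pcong_sym (pcong_sum_geom p.-1 exy)).
  by rewrite -mulr_natl unitrM unitrX // andbT natr_unit // gtnNdvd //; lia.
apply/eqP; rewrite -subr_eq0 -(mulIr_eq0 _ (mulIr S_unit)) -subrXX x1 y1.
by rewrite subrr.
Qed.

(** * Binomial coefficients of p-adic integers *)

Definition in_Zp (z : W) := forall K, exists N : nat, pcong K z N%:R.

Lemma in_Zp_nat (N : nat) : in_Zp N%:R.
Proof. by move=> K; exists N; apply: pcong_refl. Qed.

Lemma in_ZpM {x y} : in_Zp x -> in_Zp y -> in_Zp (x * y).
Proof.
move=> Zx Zy K; have [N eN] := Zx K; have [M eM] := Zy K.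
by exists (N * M)%N; rewrite natrM; apply: pcongM.
Qed.

Lemma pcong_prod_sub {K z N} n : pcong K z N%:R ->
  pcong K (\prod_(j < n) (z - j%:R)) (N ^_ n)%:R.
Proof.
by move=> ezN; rewrite -prod_natr_sub; apply: pcong_prod => j _;
  apply: pcongB ezN (pcong_refl _ _).
Qed.

(* [z (z-1) ... (z-n+1)] is congruent to [N^_n], a multiple of [n!], modulo the
   [p]-part of [n!], and the prime-to-[p] part of [n!] is a unit. *)
Lemma binomR_spec {z} n : in_Zp z ->
  (n`!)%:R * binomR z n = \prod_(j < n) (z - j%:R).
Proof.
move=> Zz; apply: (epsilon_spec (inhabits 0)
  (fun c : W => (n`!)%:R * c = \prod_(j < n) (z - j%:R))).
have [u u_unit eu] := natr_fact_pfactor n; have [N eN] := Zz (logn p n`!).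
have [t et] := pcong_prod_sub n eN; exists ('C(N, n)%:R + u^-1 * t).
rewrite mulrDr -natrM mulnC bin_ffact eu -mulrA (mulrA u) mulrV // mul1r.
by rewrite -et addrC subrK.
Qed.

Lemma binomR_nat (N n : nat) : binomR (N%:R : W) n = 'C(N, n)%:R.
Proof.
apply: (@natr_fact_inj n); rewrite /= (binomR_spec n (in_Zp_nat N)).
by rewrite prod_natr_sub -natrM mulnC bin_ffact.
Qed.

Lemma binomR_pcong K z (N n : nat) : in_Zp z -> pcong (K + logn p n`!) z N%:R ->
  pcong K (binomR z n) 'C(N, n)%:R.
Proof.
move=> Zz ezN; have [u u_unit eu] := natr_fact_pfactor n.
have [t et] := pcong_prod_sub n ezN; exists (u^-1 * t).
rewrite -prod_natr_sub -(binomR_spec n (in_Zp_nat N)) -binomR_spec // -mulrBr in et.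
rewrite binomR_nat eu addnC exprD -!mulrA in et.
by apply: (mulrI u_unit); move/mulpX_inj: et => ->; rewrite mulrCA mulVKr.
Qed.

Lemma pow1pX_sub1_nat (N : nat) m :
  pow1pX_sub1 (N%:R : W) m = (('X + 1) ^+ N - 1 : {poly W})`_m.
Proof.
rewrite coefB coef_X_add1_exp coefC /pow1pX_sub1 binomR_nat.
by case: m => [|m] /=; rewrite ?bin0 ?subrr ?subr0.
Qed.

Lemma scomp_pow1pX_sub1_nat (M N : nat) :
  scomp (pow1pX_sub1 M%:R) (pow1pX_sub1 N%:R) =1 pow1pX_sub1 (M%:R * N%:R : W).
Proof.
move=> m; have lt_m : (m < m.+1)%N by [].
rewrite (scomp_trunc _ _ lt_m (erefl : pow1pX_sub1 _ 0%N = 0)).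
have eB K : eqmodX m.+1 (trunc_poly m.+1 (pow1pX_sub1 (K%:R : W))) (('X + 1) ^+ K - 1).
  by move=> i lt_i; rewrite coef_trunc_poly // pow1pX_sub1_nat.
rewrite (eqmodX_comp (eB M) (eB N) _ _ m lt_m) ?coef_trunc_poly //; last first.
  by rewrite -pow1pX_sub1_nat.
rewrite rmorphB /= rmorphXn rmorphD /= comp_polyX comp_polyC subrK.
by rewrite -exprM mulnC -natrM -pow1pX_sub1_nat.
Qed.

Lemma pow1pX_sub1_pcong {K z N m j} : in_Zp z ->
  pcong (K + logn p m`!) z N%:R -> (j <= m)%N ->
  pcong K (pow1pX_sub1 z j) (pow1pX_sub1 N%:R j).
Proof.
move=> Zz ezN le_jm; case: j le_jm => [|j] le_jm; first exact: pcong_refl.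
rewrite /pow1pX_sub1 /= binomR_nat; apply: binomR_pcong => //.
apply: pcong_le ezN; rewrite leq_add2l dvdn_leq_log ?fact_gt0 //.
exact: fact_dvdn.
Qed.

Lemma scomp_pow1pX_sub1 {x y} : in_Zp x -> in_Zp y ->
  scomp (pow1pX_sub1 x) (pow1pX_sub1 y) =1 pow1pX_sub1 (x * y).
Proof.
move=> Zx Zy m; apply: pcong_eq => K.
have [M eM] := Zx (K + logn p m`!)%N; have [N eN] := Zy (K + logn p m`!)%N.
apply: (pcong_trans (y := scomp (pow1pX_sub1 M%:R) (pow1pX_sub1 N%:R) m)).
  apply: pcong_sum => -[k lt_km] _; apply: pcongM.
    exact: pow1pX_sub1_pcong Zx eM lt_km.
  exact: (spow_pcong (fun j => pow1pX_sub1_pcong Zy eN)) _ _ (leqnn m).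
rewrite scomp_pow1pX_sub1_nat -natrM; apply: pcong_sym.
apply: pow1pX_sub1_pcong (in_ZpM Zx Zy) _ (leqnn m).
by rewrite natrM; apply: pcongM.
Qed.

(** * Teichmuller representatives *)

Section Teichmuller.
Variable omega : 'I_p -> W.
Hypotheses (p_odd : odd p) (omega_spec : forall a : 'I_p, (0 < a)%N ->
  omega a ^+ p.-1 = 1 /\ pdvd p (omega a - (a : nat)%:R)).

Lemma p_gt2 : (2 < p)%N.
Proof. by rewrite ltn_neqAle prime_gt1 // andbT; apply: contraTneq p_odd => <-. Qed.

Lemma omega_unity {a : 'I_p} : (0 < a)%N -> omega a ^+ p.-1 = 1.
Proof. by case/omega_spec. Qed.

Lemma omega_pcong {a : 'I_p} : (0 < a)%N -> pcong 1 (omega a) (a : nat)%:R.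
Proof. by case/omega_spec => _ [y e]; exists y; rewrite expr1. Qed.

Lemma omega_unit {a : 'I_p} : (0 < a)%N -> omega a \is a GRing.unit.
Proof.
move=> a_gt0; apply/unitrP; exists (omega a ^+ p.-2).
have ep : p.-2.+1 = p.-1 by have := p_gt2; lia.
by rewrite -exprS -exprSr ep omega_unity.
Qed.

Lemma omegaV {a : 'I_p} : (0 < a)%N -> (omega a)^-1 = omega a ^+ p.-2.
Proof.
move=> a_gt0; have ep : p.-2.+1 = p.-1 by have := p_gt2; lia.
apply: (mulrI (omega_unit a_gt0)).
by rewrite mulrV ?omega_unit // -exprS ep omega_unity.
Qed.

Lemma omegaX_mod {a : 'I_p} n : (0 < a)%N -> omega a ^+ n = omega a ^+ (n %% p.-1).
Proof. by move=> a_gt0; rewrite expr_mod // omega_unity. Qed.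

Lemma in_Zp_omega {a : 'I_p} : (0 < a)%N -> in_Zp (omega a).
Proof.
move=> a_gt0 K; exists (a ^ (p ^ K))%N; have p_gt2 := p_gt2.
(* omega a = omega a ^+ p^K, and each p-th power gains a power of p in a
   congruence. *)
have p_mod : (p %% p.-1 = 1)%N.
  by rewrite -{1}(prednK (prime_gt0 p_pr)) -addn1 modnDl modn_small //; lia.
have -> : omega a = omega a ^+ (p ^ K).
  by rewrite (omegaX_mod _ a_gt0) -modnXm p_mod exp1n modn_small ?expr1 //; lia.
by rewrite natrX; apply: pcong_le (pcong_exppn K (omega_pcong a_gt0)).
Qed.

Lemma omega_sub_unit {a b : 'I_p} : (0 < a)%N -> (0 < b)%N -> a != b ->
  omega a - omega b \is a GRing.unit.
Proof.
move=> a_gt0 b_gt0 neq_ab; apply: (pcong_unit (natr_sub_unit (ltn_ord a) (ltn_ord b) neq_ab)).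
by apply: pcong_sym; apply: pcongB; apply: omega_pcong.
Qed.

Lemma omega_inj {a b : 'I_p} : (0 < a)%N -> (0 < b)%N -> omega a = omega b -> a = b.
Proof.
move=> a_gt0 b_gt0 eab; apply/eqP/negPn/negP => /(omega_sub_unit a_gt0 b_gt0).
by rewrite eab subrr unitr0.
Qed.

Definition mulIp (a b : 'I_p) : 'I_p := Ordinal (ltn_pmod (a * b) (prime_gt0 p_pr)).

Lemma mulIp_gt0 {a b : 'I_p} : (0 < a)%N -> (0 < b)%N -> (0 < mulIp a b)%N.
Proof.
move=> a_gt0 b_gt0; rewrite lt0n; apply/negP => /eqP ab0.
have : (p %| a * b)%N := introT eqP ab0.
by rewrite Euclid_dvdM // !gtnNdvd.
Qed.

Lemma omegaM {a b : 'I_p} : (0 < a)%N -> (0 < b)%N ->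
  omega a * omega b = omega (mulIp a b).
Proof.
move=> a_gt0 b_gt0; have ab_gt0 := mulIp_gt0 a_gt0 b_gt0.
(* Both sides are (p-1)-th roots of unity congruent to a b modulo p. *)
apply: pcong_unity_eq; first by rewrite exprMn !omega_unity ?mulr1.
  by rewrite omega_unity.
apply: pcong_trans (pcongM (omega_pcong a_gt0) (omega_pcong b_gt0)) _.
apply: pcong_trans (pcong_sym (omega_pcong ab_gt0)).
rewrite -natrM /= {1}(divn_eq (a * b) p) natrD.
by exists ((a * b) %/ p)%:R; rewrite addrK natrM mulrC expr1.
Qed.

Lemma mulIp_inj {b : 'I_p} : (0 < b)%N -> injective (mulIp b).
Proof.
move=> b_gt0 x y; case: (posnP x) => [x0 | x_gt0]; case: (posnP y) => [y0 | y_gt0].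
- by move=> _; apply: val_inj; rewrite /= x0 y0.
- by move=> exy; have := mulIp_gt0 b_gt0 y_gt0; rewrite -exy /= x0 muln0 mod0n.
- by move=> exy; have := mulIp_gt0 b_gt0 x_gt0; rewrite exy /= y0 muln0 mod0n.
move=> exy; apply: (omega_inj x_gt0 y_gt0); apply: (mulrI (omega_unit b_gt0)).
by rewrite (omegaM b_gt0 x_gt0) (omegaM b_gt0 y_gt0) exy.
Qed.

Lemma reindex_mulIp {b : 'I_p} (F : 'I_p -> W) : (0 < b)%N ->
  \sum_(a < p | (0 < a)%N) F (mulIp b a) = \sum_(a < p | (0 < a)%N) F a.
Proof.
move=> b_gt0; rewrite [RHS](reindex_inj (mulIp_inj b_gt0)); apply: eq_bigl => a.
case: (posnP a) => [a0 | a_gt0]; last by rewrite mulIp_gt0.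
by rewrite /mulIp /= a0 muln0 mod0n.
Qed.

Lemma omegaX_sub1_unit {k} : ~~ (p.-1 %| k)%N ->
  exists2 b : 'I_p, (0 < b)%N & omega b ^+ k - 1 \is a GRing.unit.
Proof.
move=> p1_k; have p_gt2 := p_gt2.
have k_mod : (0 < k %% p.-1 < p.-1)%N.
  by rewrite ltn_pmod ?andbT -?lt0n //; lia.
have [b /andP[b_gt0 lt_bp] nroot] := exists_pow_neq1_modp p_pr k_mod.
exists (Ordinal lt_bp) => //; rewrite (omegaX_mod (a := Ordinal lt_bp) k b_gt0).
apply: (pcong_unit (natr_unit nroot)).
rewrite natrB ?expn_gt0 ?b_gt0 // natrX.
by apply: pcongB (pcong_refl _ _); apply: pcongX; apply: pcong_sym; apply: omega_pcong.
Qed.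

Lemma sum_omegaX k : \sum_(a < p | (0 < a)%N) omega a ^+ k =
  if (p.-1 %| k)%N then p.-1%:R else 0.
Proof.
case: ifPn => [p1_k | /omegaX_sub1_unit[b b_gt0 b_unit]].
  rewrite -sumr_pos_ord1; apply: eq_bigr => a a_gt0.
  by rewrite (omegaX_mod _ a_gt0) (eqP p1_k) expr0.
set S := \sum_(a < p | _) _; apply: (mulrI b_unit); rewrite mulr0 mulrBl mul1r.
rewrite mulr_sumr -[X in _ - X](reindex_mulIp (fun a => omega a ^+ k) b_gt0).
apply/eqP; rewrite subr_eq0; apply/eqP.
by apply: eq_bigr => a a_gt0; rewrite -exprMn omegaM.
Qed.

Lemma omega_orth i r : (i < p.-1)%N -> (r < p.-1)%N ->
  \sum_(a < p | (0 < a)%N) (omega a)^-1 ^+ i * omega a ^+ r = (i == r)%:R * p.-1%:R.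
Proof.
move=> lt_i lt_r; have p_gt2 := p_gt2.
rewrite (eq_bigr (fun a => omega a ^+ (p.-2 * i + r))); last first.
  by move=> a a_gt0; rewrite omegaV // -exprM exprD.
rewrite sum_omegaX; case: (ltngtP i r) => [lt_ir | lt_ri | ->]; rewrite ?mul0r.
- have -> : (p.-2 * i + r = p.-1 * i + (r - i))%N by nia.
  by rewrite dvdn_addr ?dvdn_mulr // gtnNdvd //; lia.
- have -> : (p.-2 * i + r = p.-1 * i.-1 + (p.-1 - (i - r)))%N by nia.
  by rewrite dvdn_addr ?dvdn_mulr // gtnNdvd //; lia.
- have -> : (p.-2 * r + r = p.-1 * r)%N by nia.
  by rewrite dvdn_mulr // mul1r.
Qed.

Lemma omega_orth_dual (a b : 'I_p) : (0 < a)%N -> (0 < b)%N ->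
  \sum_(r < p.-1) ((omega b)^-1 * omega a) ^+ r = (a == b)%:R * p.-1%:R.
Proof.
move=> a_gt0 b_gt0; have [-> | neq_ab] := eqVneq a b.
  by rewrite mulVr ?omega_unit // (eq_bigr (fun=> 1)) ?sumr_const ?card_ord ?mul1r //
    => r _; rewrite expr1n.
set x := _ * _; have x_sub1_unit : x - 1 \is a GRing.unit.
  rewrite /x -(mulVr (omega_unit b_gt0)) -mulrBr unitrM unitrV omega_unit //.
  exact: omega_sub_unit.
rewrite mul0r; apply: (mulrI x_sub1_unit); rewrite -subrX1 /x exprMn exprVn.
by rewrite !omega_unity // invr1 mul1r subrr mulr0.
Qed.

(** * The linearizing parameter *)

Lemma natr_p1_unit : (p.-1%:R : W) \is a GRing.unit.
Proof. by apply: natr_unit; rewrite gtnNdvd //; have := p_gt2; lia. Qed.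

Definition lin_param : series W := fun n => (p.-1%:R)^-1 *
  \sum_(b < p | (0 < b)%N) (omega b)^-1 * pow1pX_sub1 (omega b) n.

Lemma lin_param0 : lin_param 0%N = 0.
Proof. by rewrite /lin_param big1 ?mulr0 // => b _; rewrite mulr0. Qed.

Lemma lin_param1 : lin_param 1%N = 1.
Proof.
rewrite /lin_param (eq_bigr (fun=> 1)) ?sumr_pos_ord1 ?mulVr ?natr_p1_unit //.
by move=> b b_gt0; rewrite pow1pX_sub1_coef1 mulVr ?omega_unit.
Qed.

Lemma gact_lin_param (a : 'I_p) : (0 < a)%N ->
  gact (omega a) lin_param =1 (fun n => omega a * lin_param n).
Proof.
move=> a_gt0 m; rewrite /gact /lin_param scomp_scale scomp_sum mulrCA; congr (_ * _).
rewrite -(reindex_mulIp (fun b => (omega b)^-1 * pow1pX_sub1 (omega b) m) a_gt0).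
rewrite mulr_sumr; apply: eq_bigr => b b_gt0 /=.
rewrite (scomp_pow1pX_sub1 (in_Zp_omega b_gt0) (in_Zp_omega a_gt0)).
rewrite -(omegaM a_gt0 b_gt0) invrM ?omega_unit // -mulrA mulrCA.
by rewrite mulVKr ?omega_unit // (mulrC (omega b)).
Qed.

Definition reparam (F : series W) : series W := scomp F lin_param.

Lemma reparamE F m : reparam F m = F m + \sum_(k < m) F k * spow lin_param k m.
Proof.
rewrite /reparam /scomp big_ord_recr /= spow_diag ?lin_param0 //.
by rewrite lin_param1 expr1n mulr1 addrC.
Qed.

Lemma reparam_inj {F G} : reparam F =1 reparam G -> F =1 G.
Proof.
move=> eFG m; elim/ltn_ind: m => m IHm; move: (eFG m); rewrite !reparamE.
rewrite (eq_bigr (fun k : 'I_m => G k * spow lin_param k m)) => [/addIr // | k _].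
by rewrite IHm.
Qed.

(* The first [n.+1] coefficients of the preimage of [f], solved for one at a
   time from the unitriangular system [reparamE]. *)
Fixpoint reparam_inv_seq (f : series W) (n : nat) : seq W :=
  if n is n'.+1 then
    let s := reparam_inv_seq f n' in
    rcons s (f n - \sum_(k < n) nth 0 s k * spow lin_param k n)
  else [:: f 0%N].

Definition reparam_inv (f : series W) : series W :=
  fun k => nth 0 (reparam_inv_seq f k) k.

Lemma size_reparam_inv_seq f n : size (reparam_inv_seq f n) = n.+1.
Proof. by elim: n => [|n IHn] //=; rewrite size_rcons IHn. Qed.

Lemma nth_reparam_inv_seq f n m k : (k <= n <= m)%N ->
  nth 0 (reparam_inv_seq f m) k = nth 0 (reparam_inv_seq f n) k.
Proof.
move=> /andP[le_kn]; elim: m => [|m IHm]; first by rewrite leqn0 => /eqP ->.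
rewrite leq_eqVlt ltnS => /predU1P[-> // | le_nm] /=.
by rewrite nth_rcons size_reparam_inv_seq ltnS (leq_trans le_kn le_nm) IHm.
Qed.

Lemma reparam_invK f : reparam (reparam_inv f) =1 f.
Proof.
case=> [|n]; first by rewrite /reparam scomp_coef0 ?lin_param0.
rewrite reparamE /reparam_inv /= nth_rcons size_reparam_inv_seq ltnn eqxx.
set s := reparam_inv_seq f n.
rewrite [X in _ + X](eq_bigr (fun k : 'I_n.+1 => nth 0 s k * spow lin_param k n.+1)) ?subrK //.
by move=> k _; rewrite (nth_reparam_inv_seq f k n k) // leqnn -ltnS ltn_ord.
Qed.

Lemma gact_reparam (a : 'I_p) F : (0 < a)%N ->
  gact (omega a) (reparam F) =1 reparam (fun n => omega a ^+ n * F n).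
Proof.
move=> a_gt0 m; rewrite /gact /reparam scompA ?lin_param0 //.
have -> : scomp lin_param (pow1pX_sub1 (omega a)) = (fun n => omega a * lin_param n).
  exact/functional_extensionality/gact_lin_param.
exact: scomp_scale_inner.
Qed.

Lemma reparamM F G : reparam (smul F G) =1 smul (reparam F) (reparam G).
Proof. exact/scompM/lin_param0. Qed.

Lemma reparam_sum (G : 'I_p -> series W) n :
  \sum_(a < p | (0 < a)%N) reparam (G a) n =
  reparam (fun m => \sum_(a < p | (0 < a)%N) G a m) n.
Proof.
have -> : (fun m => \sum_(a < p | (0 < a)%N) G a m) =
          (fun m => \sum_(a < p | (0 < a)%N) 1 * G a m).
  by apply: functional_extensionality => m; under [RHS]eq_bigr do rewrite mul1r.
by rewrite /reparam scomp_sum; under [RHS]eq_bigr do rewrite mul1r.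
Qed.

(** * The basis *)

Definition geom_trunc : series W := fun n => (n < p.-1)%N%:R.

Definition e_basis : series W := reparam geom_trunc.

Definition twisted_geom (a : 'I_p) : series W := fun n => omega a ^+ n * geom_trunc n.

Lemma twisted_geom_lt (a : 'I_p) j : (j < p.-1)%N -> twisted_geom a j = omega a ^+ j.
Proof. by move=> lt_j; rewrite /twisted_geom /geom_trunc lt_j mulr1. Qed.

Lemma twisted_geom_ge (a : 'I_p) j : (p.-1 <= j)%N -> twisted_geom a j = 0.
Proof. by move=> le_j; rewrite /twisted_geom /geom_trunc ltnNge le_j mulr0. Qed.

Lemma gact_e_basis (a : 'I_p) : (0 < a)%N ->
  gact (omega a) e_basis = reparam (twisted_geom a).
Proof. by move=> a_gt0; apply: functional_extensionality => n; apply: gact_reparam. Qed.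

Lemma combo_reparam (C : 'I_p -> series W) :
  combo omega (fun a => reparam (C a)) e_basis =1
  reparam (fun n => \sum_(a < p | (0 < a)%N) smul (C a) (twisted_geom a) n).
Proof.
move=> n; rewrite /combo -reparam_sum; apply: eq_bigr => a a_gt0.
by rewrite gact_e_basis // -reparamM.
Qed.

Lemma coef_sum_smul_twisted_geom (C : 'I_p -> series W) (n : nat) :
  (forall a : 'I_p, (0 < a)%N -> forall j, ~~ (p.-1 %| j)%N -> C a j = 0) ->
  \sum_(a < p | (0 < a)%N) smul (C a) (twisted_geom a) n =
  \sum_(a < p | (0 < a)%N) C a (n %/ p.-1 * p.-1)%N * omega a ^+ (n %% p.-1).
Proof.
have p1_gt0 : (0 < p.-1)%N by have := p_gt2; lia.
move=> C0; apply: eq_bigr => a a_gt0.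
rewrite (smul_dvd_supp n p1_gt0 (C0 a a_gt0) (twisted_geom_ge a)).
by rewrite twisted_geom_lt ?ltn_pmod.
Qed.

Lemma reparam_fixedGf (C : series W) :
  (forall j, ~~ (p.-1 %| j)%N -> C j = 0) -> fixedGf omega (reparam C).
Proof.
move=> C0 a a_gt0 m; rewrite gact_reparam //; congr (reparam _ m).
apply: functional_extensionality => n; have [p1_n | /C0 ->] := boolP (p.-1 %| n)%N.
  by rewrite (omegaX_mod n a_gt0) (eqP p1_n) mul1r.
by rewrite mulr0.
Qed.

Lemma fixedGf_reparam_inv (c : series W) : fixedGf omega c ->
  forall n, ~~ (p.-1 %| n)%N -> reparam_inv c n = 0.
Proof.
move=> c_fixed n p1_n; have [b b_gt0 b_unit] := omegaX_sub1_unit p1_n.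
have e : reparam (fun m => omega b ^+ m * reparam_inv c m) =1 reparam (reparam_inv c).
  move=> m; rewrite -gact_reparam //.
  have -> : reparam (reparam_inv c) = c by apply/functional_extensionality/reparam_invK.
  exact: c_fixed.
by apply: (mulrI b_unit); rewrite mulr0 mulrBl mul1r (reparam_inj e) subrr.
Qed.

Lemma omega_interp (y : nat -> W) r : (r < p.-1)%N ->
  \sum_(a < p | (0 < a)%N)
    ((p.-1%:R)^-1 * \sum_(i < p.-1) (omega a)^-1 ^+ i * y i) * omega a ^+ r = y r.
Proof.
move=> lt_r; rewrite (eq_bigr (fun a => (p.-1%:R)^-1 *
  \sum_(i < p.-1) (omega a)^-1 ^+ i * omega a ^+ r * y i)); last first.
  move=> a _; rewrite -mulrA mulr_suml; congr (_ * _).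
  by apply: eq_bigr => i _; rewrite mulrAC.
rewrite -mulr_sumr exchange_big /=.
rewrite (eq_bigr (fun i : 'I_p.-1 => ((i : nat) == r)%:R * p.-1%:R * y i)); last first.
  by move=> i _; rewrite -mulr_suml omega_orth.
rewrite (bigD1 (Ordinal lt_r)) //= eqxx mul1r big1 ?addr0 => [|i ne_ir]; last first.
  by have /negbTE -> : (i : nat) != r := ne_ir; rewrite !mul0r.
by rewrite mulrA mulVr ?natr_p1_unit ?mul1r.
Qed.

Lemma omega_vandermonde_inj (x : 'I_p -> W) :
  (forall r, (r < p.-1)%N -> \sum_(a < p | (0 < a)%N) x a * omega a ^+ r = 0) ->
  forall b : 'I_p, (0 < b)%N -> x b = 0.
Proof.
move=> x0 b b_gt0.
have : \sum_(r < p.-1) (omega b)^-1 ^+ r *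
       \sum_(a < p | (0 < a)%N) x a * omega a ^+ r = 0.
  by rewrite big1 // => r _; rewrite x0 ?mulr0.
rewrite (eq_bigr (fun r : 'I_p.-1 =>
  \sum_(a < p | (0 < a)%N) x a * ((omega b)^-1 * omega a) ^+ r)); last first.
  by move=> r _; rewrite mulr_sumr; apply: eq_bigr => a _; rewrite exprMn mulrCA.
rewrite exchange_big /= (eq_bigr (fun a => x a * ((a == b)%:R * p.-1%:R))); last first.
  by move=> a a_gt0; rewrite -mulr_sumr omega_orth_dual.
rewrite (bigD1 b) //= eqxx mul1r big1 ?addr0 => [|a /andP[_ /negbTE ->]]; last first.
  by rewrite !mul0r mulr0.
by move/(congr1 ( *%R^~ (p.-1%:R)^-1)); rewrite mul0r mulrK ?natr_p1_unit.
Qed.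

Lemma e_basis_spanning (f : series W) : exists c : 'I_p -> series W,
  (forall a : 'I_p, (0 < a)%N -> fixedGf omega (c a)) /\ f =1 combo omega c e_basis.
Proof.
pose F := reparam_inv f.
pose C (a : 'I_p) : series W := fun n => if (p.-1 %| n)%N then
  (p.-1%:R)^-1 * \sum_(i < p.-1) (omega a)^-1 ^+ i * F (n + i)%N else 0.
have C0 (a : 'I_p) : (0 < a)%N -> forall j, ~~ (p.-1 %| j)%N -> C a j = 0.
  by move=> _ j /negbTE p1_j; rewrite /C p1_j.
exists (fun a => reparam (C a)); split => [a a_gt0 | n].
  exact: reparam_fixedGf (C0 a a_gt0).
rewrite combo_reparam -[LHS](reparam_invK f); congr (reparam _ n).
apply: functional_extensionality => m.
have p1_gt0 : (0 < p.-1)%N by have := p_gt2; lia.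
rewrite coef_sum_smul_twisted_geom // /C dvdn_mull //.
by rewrite (omega_interp (fun i => F (m %/ p.-1 * p.-1 + i)%N)) ?ltn_pmod // -divn_eq.
Qed.

Lemma e_basis_free (c : 'I_p -> series W) :
  (forall a : 'I_p, (0 < a)%N -> fixedGf omega (c a)) ->
  combo omega c e_basis =1 szero W ->
  forall a : 'I_p, (0 < a)%N -> c a =1 szero W.
Proof.
move=> c_fixed c0; pose C a := reparam_inv (c a).
have ec : c = fun a => reparam (C a).
  apply/functional_extensionality => a.
  by apply/functional_extensionality => n; rewrite reparam_invK.
have C0 (a : 'I_p) : (0 < a)%N -> forall j, ~~ (p.-1 %| j)%N -> C a j = 0.
  by move=> a_gt0; apply: fixedGf_reparam_inv (c_fixed a a_gt0).
have sum0 : (fun n => \sum_(a < p | (0 < a)%N) smul (C a) (twisted_geom a) n) =1 szero W.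
  apply: reparam_inj => n.
  by rewrite -combo_reparam -ec c0 /reparam scomp_szero.
move=> b b_gt0 n; rewrite ec /reparam.
suff -> : C b = szero W by rewrite scomp_szero.
apply: functional_extensionality => j.
have [/dvdnP[q ->] | /(C0 b b_gt0) -> //] := boolP (p.-1 %| j)%N.
apply: (omega_vandermonde_inj (fun a => C a (q * p.-1)%N)) => // r lt_r.
have p1_gt0 : (0 < p.-1)%N by have := p_gt2; lia.
move: (sum0 (q * p.-1 + r)%N); rewrite coef_sum_smul_twisted_geom //.
by rewrite divnMDl // divn_small // addn0 modnMDl modn_small.
Qed.

Lemma proj_i_e_basis i : (i < p.-1)%N ->
  proj_i omega i e_basis =1 reparam (fun m => (i == m)%:R).
Proof.
move=> lt_i n; rewrite /proj_i.
rewrite (eq_bigr (fun a => (omega a)^-1 ^+ i * reparam (twisted_geom a) n)); last first.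
  by move=> a a_gt0; rewrite gact_e_basis.
rewrite /reparam -scomp_sum -scomp_scale; congr (scomp _ _ n).
apply: functional_extensionality => m; case: (ltnP m p.-1) => [lt_m | le_m].
  rewrite (eq_bigr (fun a => (omega a)^-1 ^+ i * omega a ^+ m)); last first.
    by move=> a _; rewrite twisted_geom_lt.
  by rewrite omega_orth // mulrCA mulVr ?natr_p1_unit ?mulr1.
rewrite big1 ?mulr0; last by move=> a _; rewrite twisted_geom_ge ?mulr0.
by have /negbTE -> : i != m by apply: contraTneq le_m => <-; rewrite -ltnNge.
Qed.

Lemma proj_i_e_basis_npdvd i : (i < p.-1)%N ->
  ~ pdvd_series p (proj_i omega i e_basis).
Proof.
move=> lt_i [h eh]; move/negP: p_nonunit; apply; apply/unitrP; exists (h i).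
move: (eh i); rewrite proj_i_e_basis // reparamE eqxx big1 ?addr0 => [/esym|k _].
  by rewrite /sscale mulrC => ->.
have /negbTE -> : i != k by rewrite neq_ltn ltn_ord orbT.
by rewrite mul0r.
Qed.

End Teichmuller.
End StrictPRing.
End PAdic.

Theorem lemma24 (p : nat) (W : comUnitRingType) (omega : 'I_p -> W) :
  prime p -> odd p -> strict_p_ring W p ->
  (forall a : 'I_p, (0 < a)%N ->
     omega a ^+ p.-1 = 1 /\ pdvd p (omega a - (a : nat)%:R)) ->
  exists e : series W,
    is_basis_over_S0 omega e /\
    (forall i : nat, (i <= p - 2)%N -> ~ pdvd_series p (proj_i omega i e)).
Proof.
move=> p_pr p_odd W_strict omega_spec.
exists (e_basis p omega); split; first split.
- exact: e_basis_spanning.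
- exact: e_basis_free.
move=> i le_i; apply: proj_i_e_basis_npdvd => //.
by have := prime_gt1 p_pr; lia.
Qed.
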